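(* Fix $\lambda>0$. For real $d\ge1$ let $\tilde x(d)$ be the unique positive solution of $d\,x=1+\lambda/(1+x)^d$ and $\nu(d)=\frac{d\tilde x(d)-1}{1+\tilde x(d)}$. Then the function $H(x)=\log\big(e^x\nu(e^x)\big)$ is concave on $[0,\infty)$.
   Context: Equivalently $\nu(d)=\sup_{x\ge0}\frac{dx}{1+x}\cdot\frac{f(x)}{1+f(x)}$ with $f(x)=\lambda/(1+x)^d$. *)

From Stdlib Require Import Reals ClassicalEpsilon.
Open Scope R_scope.

Definition xtilde_eq (lam d x : R) : Prop :=
  0 < x /\ d * x = 1 + lam / Rpower (1 + x) d.

Definition xtilde (lam d : R) : R :=
  epsilon (inhabits 0) (fun x => xtilde_eq lam d x).

Definition nu (lam d : R) : R :=
  (d * xtilde lam d - 1) / (1 + xtilde lam d).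

Definition H (lam x : R) : R := ln (exp x * nu lam (exp x)).

Definition concave_on (S : R -> Prop) (f : R -> R) : Prop :=
  forall x y t, S x -> S y -> 0 <= t <= 1 ->
    t * f x + (1 - t) * f y <= f (t * x + (1 - t) * y).

(* With d = e^t, the defining equation of x~(d) is the first-order condition of
   H(t) = max_b psi(t, b),  psi(t, b) = 2t + ln lam + ln(1 - e^(-e^b)) - ln(lam + exp(e^(t+b))),
   the maximum being attained at e^b = ln(1 + x~(d)) (a weighted AM-GM inequality).
   The function psi is jointly concave: b |-> ln(1 - e^(-e^b)) is concave since
   a/(e^a - 1) decreases, and (t, b) |-> ln(lam + exp(e^(t+b))) is the increasing convex
   function w |-> ln(lam + e^w) of the convex function e^(t+b). A maximum over b of a jointly
   concave function is concave in t; in fact H is concave on the whole real line. *)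

From Stdlib Require Import Reals Lra ClassicalEpsilon.
From Coquelicot Require Import Coquelicot.
Open Scope R_scope.

Lemma exp_le_compat x y : x <= y -> exp x <= exp y.
Proof. intros [Hlt|Heq]; [apply Rlt_le, exp_increasing; exact Hlt | subst; lra]. Qed.

Lemma expm1_pos a : 0 < a -> 0 < exp a - 1.
Proof. intros Ha. pose proof (exp_ineq1 a ltac:(lra)). lra. Qed.

Lemma one_sub_exp_neg_pos a : 0 < a -> 0 < 1 - exp (- a).
Proof.
  intros Ha. pose proof (exp_increasing (- a) 0 ltac:(lra)). rewrite exp_0 in *. lra.
Qed.

Lemma concave_of_supporting_lines (f : R -> R) :
  (forall m, exists k, forall x, f x <= f m + k * (x - m)) ->
  concave_on (fun _ => True) f.
Proof.
  intros Hsupp x y l _ _ Hl.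
  set (m := l * x + (1 - l) * y).
  destruct (Hsupp m) as [k Hk].
  assert (l * f x <= l * (f m + k * (x - m))) by (apply Rmult_le_compat_l, Hk; lra).
  assert ((1 - l) * f y <= (1 - l) * (f m + k * (y - m)))
    by (apply Rmult_le_compat_l, Hk; lra).
  assert (l * (f m + k * (x - m)) + (1 - l) * (f m + k * (y - m)) = f m)
    by (unfold m; ring).
  lra.
Qed.

Lemma exp_convex l p q : 0 <= l <= 1 ->
  exp (l * p + (1 - l) * q) <= l * exp p + (1 - l) * exp q.
Proof.
  intros Hl.
  assert (Hconc : concave_on (fun _ => True) (fun x => - exp x)).
  { apply concave_of_supporting_lines. intros m. exists (- exp m). intros x.
    pose proof (exp_ineq1_le (x - m)).
    assert (exp x = exp m * exp (x - m)) by (rewrite <- exp_plus; f_equal; ring).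
    pose proof (exp_pos m). nra. }
  specialize (Hconc p q l I I Hl). simpl in Hconc. lra.
Qed.

Lemma amgm_exp d s : 0 < d -> d + 1 <= exp (d * s) + d * exp (- s).
Proof.
  intros Hd.
  assert (Hl : 0 <= / (d + 1) <= 1).
  { split; [apply Rlt_le, Rinv_0_lt_compat; lra|].
    rewrite <- Rinv_1. apply Rinv_le_contravar; lra. }
  pose proof (exp_convex (/ (d + 1)) (d * s) (- s) Hl) as Hconv.
  replace (/ (d + 1) * (d * s) + (1 - / (d + 1)) * - s) with 0 in Hconv by (field; lra).
  rewrite exp_0 in Hconv.
  apply (Rmult_le_compat_l (d + 1)) in Hconv; [|lra].
  replace ((d + 1) * (/ (d + 1) * exp (d * s) + (1 - / (d + 1)) * exp (- s)))
    with (exp (d * s) + d * exp (- s)) in Hconv by (field; lra).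
  lra.
Qed.

Lemma ln_add_exp_convex lam l u v : 0 < lam -> 0 <= l <= 1 ->
  ln (lam + exp (l * u + (1 - l) * v)) <=
  l * ln (lam + exp u) + (1 - l) * ln (lam + exp v).
Proof.
  intros Hlam Hl.
  set (f := fun w => - ln (lam + exp w)).
  assert (Hconc : concave_on (fun _ => True) f).
  { apply concave_of_supporting_lines. intros m.
    set (A := lam + exp m). set (p := exp m / A).
    assert (HA : 0 < A) by (unfold A; pose proof (exp_pos m); lra).
    assert (Hp : 0 <= p <= 1).
    { unfold p. pose proof (exp_pos m).
      split; [apply Rlt_le, Rdiv_lt_0_compat; lra|].
      apply (Rmult_le_reg_r A); [lra|]. unfold A. field_simplify; lra. }
    exists (- p). intros w. unfold f.
    pose proof (exp_convex p (w - m) 0 Hp) as Hconv.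
    rewrite Rmult_0_r, Rplus_0_r, exp_0 in Hconv.
    assert (Hw : 0 < lam + exp w) by (pose proof (exp_pos w); lra).
    replace (p * exp (w - m) + (1 - p) * 1) with ((lam + exp w) / A) in Hconv
      by (unfold p, A, Rminus; rewrite exp_plus, exp_Ropp; field;
          pose proof (exp_pos m); lra).
    apply ln_le in Hconv; [|apply exp_pos].
    rewrite ln_exp, ln_div in Hconv by lra. fold A. lra. }
  specialize (Hconc u v l I I Hl). unfold f in Hconc. lra.
Qed.

Lemma expm1_div_le c c' : 0 < c -> c <= c' -> (exp c - 1) / c <= (exp c' - 1) / c'.
Proof.
  intros Hc Hcc.
  assert (Hl : 0 <= c / c' <= 1).
  { split; [apply Rlt_le, Rdiv_lt_0_compat; lra|].
    apply (Rmult_le_reg_r c'); [lra|]. field_simplify; lra. }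
  pose proof (exp_convex (c / c') c' 0 Hl) as Hconv.
  replace (c / c' * c' + (1 - c / c') * 0) with c in Hconv by (field; lra).
  rewrite exp_0 in Hconv.
  apply (Rmult_le_reg_r c); [lra|].
  replace ((exp c' - 1) / c' * c) with (c / c' * exp c' + (1 - c / c') * 1 - 1)
    by (field; lra).
  field_simplify; lra.
Qed.

Lemma le_of_deriv_sign_change (f f' : R -> R) m :
  (forall x, derivable_pt_lim f x (f' x)) ->
  (forall x, x <= m -> 0 <= f' x) ->
  (forall x, m <= x -> f' x <= 0) ->
  forall x, f x <= f m.
Proof.
  intros Hder Hinc Hdec x.
  destruct (Rtotal_order x m) as [Hlt|[Heq|Hgt]].
  - destruct (MVT_cor2 f f' x m Hlt (fun c _ => Hder c)) as [c [Hmvt Hc]].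
    assert (0 <= f' c * (m - x)) by (apply Rmult_le_pos; [apply Hinc|]; lra). lra.
  - subst. lra.
  - destruct (MVT_cor2 f f' m x Hgt (fun c _ => Hder c)) as [c [Hmvt Hc]].
    assert (f' c * (x - m) <= 0) by (apply Rmult_le_0_r; [apply Hdec|]; lra). lra.
Qed.

(* Its derivative is [a / (e^a - 1)] at [a = e^b], which decreases in [a]. *)
Lemma ln_one_sub_exp_neg_exp_concave :
  concave_on (fun _ => True) (fun b => ln (1 - exp (- exp b))).
Proof.
  apply concave_of_supporting_lines. intros m.
  set (slope := fun b => / ((exp (exp b) - 1) / exp b)).
  exists (slope m). intros x.
  enough (Hmax : ln (1 - exp (- exp x)) - slope m * x <= ln (1 - exp (- exp m)) - slope m * m)
    by lra.
  apply (le_of_deriv_sign_change (fun b => ln (1 - exp (- exp b)) - slope m * b)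
           (fun b => slope b - slope m)).
  - intros b. apply is_derive_Reals.
    assert (Hea := exp_pos b). pose proof (expm1_pos _ Hea).
    pose proof (one_sub_exp_neg_pos _ Hea).
    auto_derive; [lra|].
    pose proof (expm1_pos _ (exp_pos m)).
    unfold slope. rewrite exp_Ropp. field.
    repeat split; try apply Rgt_not_eq; try apply exp_pos; lra.
  - intros b Hb. unfold slope.
    assert (Hexp : exp b <= exp m) by (apply exp_le_compat; lra).
    pose proof (exp_pos b). pose proof (expm1_pos _ (exp_pos b)).
    enough (/ ((exp (exp m) - 1) / exp m) <= / ((exp (exp b) - 1) / exp b)) by lra.
    apply Rinv_le_contravar; [apply Rdiv_lt_0_compat; lra | apply expm1_div_le; lra].
  - intros b Hb. unfold slope.
    assert (Hexp : exp m <= exp b) by (apply exp_le_compat; lra).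
    pose proof (exp_pos m). pose proof (expm1_pos _ (exp_pos m)).
    apply Rle_minus, Rinv_le_contravar; [apply Rdiv_lt_0_compat; lra | apply expm1_div_le; lra].
Qed.

Definition psi (lam t b : R) : R :=
  2 * t + ln lam + ln (1 - exp (- exp b)) - ln (lam + exp (exp (t + b))).

Lemma psi_jointly_concave lam l t1 t2 b1 b2 : 0 < lam -> 0 <= l <= 1 ->
  l * psi lam t1 b1 + (1 - l) * psi lam t2 b2 <=
  psi lam (l * t1 + (1 - l) * t2) (l * b1 + (1 - l) * b2).
Proof.
  intros Hlam Hl.
  pose proof (ln_one_sub_exp_neg_exp_concave b1 b2 l I I Hl) as Hfirst.
  pose proof (ln_add_exp_convex lam l (exp (t1 + b1)) (exp (t2 + b2)) Hlam Hl) as Hsecond.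
  assert (Hinner : exp (l * t1 + (1 - l) * t2 + (l * b1 + (1 - l) * b2)) <=
                   l * exp (t1 + b1) + (1 - l) * exp (t2 + b2)).
  { replace (l * t1 + (1 - l) * t2 + (l * b1 + (1 - l) * b2))
      with (l * (t1 + b1) + (1 - l) * (t2 + b2)) by ring.
    apply exp_convex; exact Hl. }
  assert (Hmono : ln (lam + exp (exp (l * t1 + (1 - l) * t2 + (l * b1 + (1 - l) * b2)))) <=
                  ln (lam + exp (l * exp (t1 + b1) + (1 - l) * exp (t2 + b2)))).
  { apply ln_le; [|apply Rplus_le_compat_l, exp_le_compat, Hinner].
    pose proof (exp_pos (exp (l * t1 + (1 - l) * t2 + (l * b1 + (1 - l) * b2)))). lra. }
  simpl in Hfirst. unfold psi. lra.
Qed.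

Lemma xtilde_exists lam d : 0 < lam -> 0 < d -> exists x, xtilde_eq lam d x.
Proof.
  intros Hlam Hd.
  (* the substitution x = e^z - 1 turns the equation into f z = 0 *)
  set (f := fun z => d * (exp z - 1) - 1 - lam * exp (- (d * z))).
  assert (Hcont : continuity f) by (intro z; apply derivable_continuous_pt; unfold f; reg).
  set (M := (1 + lam) / d + 1).
  assert (HdM : d * M = 1 + lam + d) by (unfold M; field; lra).
  assert (HM : 0 < M) by (unfold M; pose proof (Rdiv_lt_0_compat (1 + lam) d ltac:(lra) Hd); lra).
  assert (Hf0 : f 0 < 0) by (unfold f; rewrite Rmult_0_r, Ropp_0, exp_0; lra).
  assert (HfM : 0 < f M).
  { unfold f. pose proof (exp_ineq1_le M).
    assert (exp (- (d * M)) < 1) by (rewrite <- exp_0; apply exp_increasing; lra).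
    assert (d * M <= d * (exp M - 1)) by (apply Rmult_le_compat_l; lra).
    assert (lam * exp (- (d * M)) < lam) by (rewrite <- (Rmult_1_r lam) at 2;
                                             apply Rmult_lt_compat_l; lra).
    lra. }
  destruct (IVT f 0 M Hcont HM Hf0 HfM) as [z [Hz Hfz]].
  assert (Hz0 : 0 < z) by (destruct Hz as [[Hpos|Heq] _]; [exact Hpos | subst; lra]).
  exists (exp z - 1). split.
  - pose proof (exp_increasing 0 z Hz0). rewrite exp_0 in *. lra.
  - unfold Rpower. replace (1 + (exp z - 1)) with (exp z) by ring. rewrite ln_exp.
    unfold f in Hfz. rewrite exp_Ropp in Hfz. unfold Rdiv. lra.
Qed.

(* [a0 = ln (1 + x~(d))]; this is [e^b] at the maximiser of [psi]. *)
Lemma xtilde_exp_param lam d : 0 < lam -> 0 < d ->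
  exists a0, 0 < a0 /\ xtilde lam d = exp a0 - 1 /\
             lam = (d * (exp a0 - 1) - 1) * exp (d * a0).
Proof.
  intros Hlam Hd.
  assert (Hspec : xtilde_eq lam d (xtilde lam d))
    by (unfold xtilde; apply epsilon_spec, xtilde_exists; assumption).
  destruct Hspec as [HX Heq]. set (X := xtilde lam d) in *.
  exists (ln (1 + X)). rewrite exp_ln by lra. repeat split.
  - rewrite <- ln_1. apply ln_increasing; lra.
  - ring.
  - unfold Rpower in Heq. replace (1 + X - 1) with X by ring.
    pose proof (exp_pos (d * ln (1 + X))). rewrite Heq. field. lra.
Qed.

Lemma psi_le_at_root lam t a0 b : 0 < lam -> 0 < a0 ->
  lam = (exp t * (exp a0 - 1) - 1) * exp (exp t * a0) ->
  psi lam t b <= psi lam t (ln a0).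
Proof.
  intros Hlam Ha0 Hroot.
  unfold psi. rewrite !exp_plus, exp_ln by exact Ha0.
  set (d := exp t) in *. set (a := exp b). set (s := a - a0).
  assert (Hd : 0 < d) by apply exp_pos.
  assert (Ha : 0 < a) by apply exp_pos.
  set (A := exp a0) in *. set (E := exp (d * a0)) in *.
  assert (HA : 1 < A) by (pose proof (expm1_pos a0 Ha0); unfold A; lra).
  assert (HE : 0 < E) by apply exp_pos.
  assert (Hexp_a : exp (- a) = exp (- s) / A).
  { unfold A, s. replace (- a) with (- (a - a0) + - a0) by ring.
    rewrite exp_plus, exp_Ropp with (x := a0). reflexivity. }
  assert (Hexp_da : exp (d * a) = E * exp (d * s))
    by (unfold E, s; rewrite <- exp_plus; f_equal; ring).
  (* clearing the logarithms and the root equation leaves [amgm_exp d s] *)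
  assert (Hkey : (1 - exp (- a)) * (lam + E) <= (1 - exp (- a0)) * (lam + exp (d * a))).
  { rewrite Hexp_a, Hexp_da, (exp_Ropp a0). fold A.
    assert (Hgap : (1 - / A) * (lam + E * exp (d * s)) - (1 - exp (- s) / A) * (lam + E) =
                   E * (A - 1) / A * (exp (d * s) + d * exp (- s) - (d + 1)))
      by (rewrite Hroot; field; lra).
    assert (0 <= E * (A - 1) / A * (exp (d * s) + d * exp (- s) - (d + 1))).
    { pose proof (amgm_exp d s Hd).
      apply Rmult_le_pos; [apply Rmult_le_pos; [apply Rmult_le_pos|]|]; try lra.
      apply Rlt_le, Rinv_0_lt_compat; lra. }
    lra. }
  pose proof (one_sub_exp_neg_pos a Ha). pose proof (one_sub_exp_neg_pos a0 Ha0).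
  pose proof (exp_pos (d * a)).
  apply ln_le in Hkey; [|apply Rmult_lt_0_compat; lra].
  rewrite !ln_mult in Hkey by lra.
  lra.
Qed.

Lemma H_eq_psi_at_root lam t a0 : 0 < lam -> 0 < a0 ->
  xtilde lam (exp t) = exp a0 - 1 ->
  lam = (exp t * (exp a0 - 1) - 1) * exp (exp t * a0) ->
  H lam t = psi lam t (ln a0).
Proof.
  intros Hlam Ha0 HX Hroot.
  unfold H, nu, psi. rewrite HX, exp_plus, exp_ln by exact Ha0.
  set (d := exp t) in *. set (A := exp a0) in *. set (E := exp (d * a0)) in *.
  assert (Hd : 0 < d) by apply exp_pos.
  assert (HA : 1 < A) by (pose proof (expm1_pos a0 Ha0); unfold A; lra).
  assert (HE : 0 < E) by apply exp_pos.
  assert (Hpos : 0 < 1 - exp (- a0)) by (apply one_sub_exp_neg_pos; exact Ha0).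
  replace (d * ((d * (A - 1) - 1) / (1 + (A - 1))))
    with (d * d * lam * (1 - exp (- a0)) / (lam + E))
    by (rewrite Hroot, exp_Ropp; fold A; field; split; [lra|];
        replace ((d * (A - 1) - 1) * E + E) with (d * (A - 1) * E) by ring;
        apply Rgt_not_eq, Rmult_lt_0_compat; [apply Rmult_lt_0_compat|]; lra).
  rewrite ln_div, !ln_mult by (repeat apply Rmult_lt_0_compat; lra).
  unfold d. rewrite ln_exp. ring.
Qed.

Lemma H_is_max_psi lam t : 0 < lam ->
  exists b0, H lam t = psi lam t b0 /\ forall b, psi lam t b <= H lam t.
Proof.
  intros Hlam.
  destruct (xtilde_exp_param lam (exp t) Hlam (exp_pos t)) as [a0 [Ha0 [HX Hroot]]].
  exists (ln a0).
  rewrite (H_eq_psi_at_root lam t a0 Hlam Ha0 HX Hroot).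
  split; [reflexivity|].
  intros b. apply psi_le_at_root; assumption.
Qed.

Lemma concave_of_max_jointly_concave (F : R -> R) (P : R -> R -> R) :
  (forall t, exists b0, F t = P t b0 /\ forall b, P t b <= F t) ->
  (forall l t1 t2 b1 b2, 0 <= l <= 1 ->
     l * P t1 b1 + (1 - l) * P t2 b2 <= P (l * t1 + (1 - l) * t2) (l * b1 + (1 - l) * b2)) ->
  concave_on (fun _ => True) F.
Proof.
  intros Hmax Hconc t1 t2 l _ _ Hl.
  destruct (Hmax t1) as [b1 [Hb1 _]].
  destruct (Hmax t2) as [b2 [Hb2 _]].
  destruct (Hmax (l * t1 + (1 - l) * t2)) as [_ [_ Hle]].
  rewrite Hb1, Hb2.
  eapply Rle_trans; [apply Hconc, Hl | apply Hle].
Qed.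

Lemma H_concave lam : 0 < lam -> concave_on (fun _ => True) (H lam).
Proof.
  intros Hlam. apply (concave_of_max_jointly_concave (H lam) (psi lam)).
  - intros t. apply H_is_max_psi, Hlam.
  - intros l t1 t2 b1 b2 Hl. apply psi_jointly_concave; assumption.
Qed.

Theorem lemma5p2 (lam : R) (hlam : 0 < lam) :
  concave_on (fun x => 0 <= x) (H lam).
Proof.
  intros x y l _ _ Hl. exact (H_concave lam hlam x y l I I Hl).
Qed.
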